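(* Let $G=G_n$ be a sequence of graphs on $n$ vertices that are $(\varepsilon_n,2)$-quasirandom with $\varepsilon_n=o(1)$, with density $\gamma=d(G)$ satisfying $\gamma=\Omega(1)$ and $1-\gamma=\Omega(1)$. Let $X,Y,Z$ be sets of ordered pairs of distinct vertices of $G$, where within each of $X$, $Y$, $Z$ the pairs are pairwise disjoint, and suppose $|X|,|Y|,|Z|=\Omega(n)$. Then there are at least $\gamma^{3}|X||Y||Z|/8-o(n^{3})$ choices of $(x_1,x_2)\in X$, $(y_1,y_2)\in Y$, $(z_1,z_2)\in Z$ such that $\{x_1,y_2\}$, $\{y_1,z_2\}$ and $\{z_1,x_2\}$ are all edges of $G$.
   Context: For a graph $G$ with $n$ vertices and $m$ edges, $d(G)=m/\binom n2$, and $G$ is $(\varepsilon,h)$-quasirandom if every set $A$ of at most $h$ vertices satisfies $\left|\bigcap_{w\in A}N_G(w)\right|=(1\pm\varepsilon)d(G)^{|A|}n$, where $x=1\pm\varepsilon$ means $1-\varepsilon\le x\le1+\varepsilon$. Asymptotics are as $n\to\infty$. *)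

From mathcomp Require Import all_boot all_order all_algebra.
Set Implicit Arguments. Unset Strict Implicit. Unset Printing Implicit Defensive.
Import Order.TTheory GRing.Theory Num.Theory.
Local Open Scope ring_scope.

Definition simple_graph (T : finType) (g : rel T) : Prop :=
  symmetric g /\ irreflexive g.

Definition edge_set (T : finType) (g : rel T) : {set {set T}} :=
  [set e : {set T} | [exists x : T, exists y : T,
      [&& x != y, g x y & e == [set x; y]]]].

Definition density (R : realFieldType) (T : finType) (g : rel T) : R :=
  (#|edge_set g|)%:R / ('C(#|T|, 2))%:R.

Definition nbhd (T : finType) (g : rel T) (w : T) : {set T} := [set v | g w v].

Definition quasirandom (R : realFieldType) (T : finType) (g : rel T)
    (eps : R) (h : nat) : Prop :=
  forall A : {set T}, (#|A| <= h)%N ->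
    (1 - eps) * density R g ^+ #|A| * (#|T|)%:R
      <= (#|\bigcap_(w in A) nbhd g w|)%:R
    /\ (#|\bigcap_(w in A) nbhd g w|)%:R
      <= (1 + eps) * density R g ^+ #|A| * (#|T|)%:R.

Definition disjoint_pairs (T : finType) (X : {set T * T}) : Prop :=
  (forall p, p \in X -> p.1 != p.2) /\
  (forall p q, p \in X -> q \in X -> p != q ->
     [disjoint [set p.1; p.2] & [set q.1; q.2]]).

(* number of (x,y,z) in X*Y*Z with x1~y2, y1~z2, z1~x2 *)
Definition triple_count (T : finType) (g : rel T) (X Y Z : {set T * T}) : nat :=
  #|[set t : (T * T) * (T * T) * (T * T) |
      [&& t.1.1 \in X, t.1.2 \in Y, t.2 \in Z,
          g t.1.1.1 t.1.2.2, g t.1.2.1 t.2.2 & g t.2.1 t.1.1.2]]|.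

From mathcomp Require Import all_boot all_order all_algebra.
From mathcomp Require Import reals.
From mathcomp Require Import ring lra.
Set Implicit Arguments. Unset Strict Implicit. Unset Printing Implicit Defensive.
Import Order.TTheory GRing.Theory Num.Theory.
Local Open Scope ring_scope.

(* Write A for the 0/1 adjacency matrix and γ for the density.  Degrees and
   codegrees are (1 ± ε)γn and (1 ± ε)γ²n, so the centred codegrees
   Σ_a (A a b - γ)(A a b' - γ) are O(εn) off the diagonal; hence the second
   moment of (A - γ)v is small and, by Cauchy–Schwarz, every bilinear form
   Σ u a v b A a b with bounded weights is γ Σu Σv + o(n²).  Because the pairs
   of X, Y, Z are disjoint, first and second coordinates are injective on each
   of them, so weights on pairs push forward to bounded weights on vertices.
   Writing the count as Σ_{z,x,y} A(z1,x2) A(x1,y2) A(y1,z2) and replacing the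
   three adjacency factors by γ one at a time yields the count
   γ³|X||Y||Z| - o(n³), which is stronger than the bound with the factor 1/8. *)

Lemma natr_cardE {R : nzSemiRingType} {T : finType} (A : {pred T}) :
  #|A|%:R = \sum_a (a \in A)%:R :> R.
Proof. by rewrite -sum1_card natr_sum big_mkcond; apply: eq_bigr => a _; case: (a \in A). Qed.

Lemma sumr_constT {R : nzSemiRingType} {I : finType} (x : R) :
  \sum_(i : I) x = #|I|%:R * x.
Proof. by rewrite sumr_const mulr_natl. Qed.

Lemma density_ge0 (R : realFieldType) {T : finType} (g : rel T) : 0 <= density R g.
Proof. by rewrite /density divr_ge0. Qed.

Lemma relative_error_le (R : realDomainType) (e x s : R) :
  0 <= x -> (1 - e) * x <= s -> s <= (1 + e) * x -> `|s - x| <= `|e| * x.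
Proof.
move=> x0 lo hi; rewrite ler_distl.
have := ler_norm e; have := ler_norm (- e); rewrite normrN => eN e_le.
apply/andP; split; nra.
Qed.

Lemma sum_norm_le_of_sum_sqr (R : realFieldType) (I : finType) (w : I -> R) (t : R) :
  0 < t -> \sum_i w i ^+ 2 <= #|I|%:R * t ^+ 2 -> \sum_i `|w i| <= #|I|%:R * t.
Proof.
move=> t0 w2.
have amgm : 2 * t * \sum_i `|w i| <= #|I|%:R * t ^+ 2 + \sum_i w i ^+ 2.
  rewrite -sumr_constT mulr_sumr -big_split /=.
  apply: ler_sum => i _; have := sqr_ge0 (`|w i| - t).
  by rewrite -(real_normK (num_real (w i))); nra.
nra.
Qed.

Section Pushforward.
Variables (R : numDomainType) (I T : finType) (f : I -> T) (X : {set I}).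

Definition pushforward (h : I -> R) (a : T) : R := \sum_(x in X) (f x == a)%:R * h x.

Lemma sum_pushforwardM (h : I -> R) (F : T -> R) :
  \sum_a pushforward h a * F a = \sum_(x in X) h x * F (f x).
Proof.
under eq_bigr do rewrite mulr_suml.
rewrite exchange_big /=; apply: eq_bigr => x _.
rewrite (bigD1 (f x)) //= eqxx mul1r big1 ?addr0 // => a neq_a.
by rewrite eq_sym (negbTE neq_a) !mul0r.
Qed.

Lemma sum_pushforward (h : I -> R) : \sum_a pushforward h a = \sum_(x in X) h x.
Proof.
have := sum_pushforwardM h (fun _ => 1).
by under eq_bigr do rewrite mulr1; under [in RHS]eq_bigr do rewrite mulr1.
Qed.

Lemma norm_pushforward_le (h : I -> R) (M : R) :
  {in X &, injective f} -> 0 <= M -> {in X, forall x, `|h x| <= M} ->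
  forall a, `|pushforward h a| <= M.
Proof.
move=> f_inj M0 h_le a; rewrite /pushforward.
case: (pickP [pred x in X | f x == a]) => [x0 /andP[x0X /eqP fx0] | no_preimage].
  rewrite (bigD1 x0) //= fx0 eqxx mul1r big1 ?addr0; first exact: h_le.
  move=> x /andP[xX neq_x]; case: eqP => [fxa|]; last by rewrite mul0r.
  by move: neq_x; rewrite (f_inj x x0 xX x0X) ?eqxx // fxa fx0.
rewrite big1 ?normr0 // => x xX.
by move: (no_preimage x); rewrite /= xX /= => ->; rewrite mul0r.
Qed.

End Pushforward.

Section Discrepancy.
Variables (R : realFieldType) (T : finType) (g : rel T) (eps : R).
Hypotheses (g_sym : symmetric g) (g_qr : quasirandom g eps 2)
  (density_le1 : density R g <= 1).

Local Notation γ := (density R g).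
Local Notation N := (#|T|%:R : R).
Local Notation A a b := ((g a b)%:R : R).

Lemma degree_deviation b : `|\sum_a A a b - γ * N| <= `|eps| * (γ * N).
Proof.
have [|lo hi] := @g_qr [set b]; first by rewrite cards1.
rewrite cards1 big_set1 expr1 (natr_cardE (nbhd g b)) in lo hi.
rewrite -(mulrA (1 - eps)) -(mulrA (1 + eps)) in lo hi.
have -> : \sum_a A a b = \sum_a (a \in nbhd g b)%:R.
  by apply: eq_bigr => a _; rewrite inE g_sym.
by apply: relative_error_le lo hi; rewrite mulr_ge0 ?density_ge0.
Qed.

Lemma codegree_deviation b b' : b != b' ->
  `|\sum_a A b a * A b' a - γ ^+ 2 * N| <= `|eps| * (γ ^+ 2 * N).
Proof.
move=> neq_bb'; have [|lo hi] := @g_qr [set b; b']; first by rewrite cards2 neq_bb'.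
rewrite cards2 neq_bb' big_setU1 ?in_set1 // big_set1 in lo hi.
rewrite (natr_cardE (nbhd g b :&: nbhd g b')) -(mulrA (1 - eps)) -(mulrA (1 + eps)) in lo hi.
have -> : \sum_a A b a * A b' a = \sum_a (a \in nbhd g b :&: nbhd g b')%:R.
  by apply: eq_bigr => a _; rewrite !inE -natrM mulnb.
by apply: relative_error_le lo hi; rewrite mulr_ge0 ?exprn_ge0 ?density_ge0.
Qed.

Definition centred_codegree b b' := \sum_a (A a b - γ) * (A a b' - γ).

Lemma centred_codegreeE b b' :
  centred_codegree b b' = (\sum_a A b a * A b' a - γ ^+ 2 * N)
    - γ * (\sum_a A a b - γ * N) - γ * (\sum_a A a b' - γ * N).
Proof.
rewrite ![_ * N]mulrC -!sumr_constT -!sumrB !mulr_sumr -!sumrB; apply: eq_bigr => a _.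
by rewrite (g_sym b a) (g_sym b' a); ring.
Qed.

Lemma centred_codegree_diag b : 0 <= centred_codegree b b <= N.
Proof.
have -> : N = \sum_(a : T) 1 by rewrite sumr_const.
apply/andP; split.
  by apply: sumr_ge0 => a _; rewrite -expr2 sqr_ge0.
apply: ler_sum => a _; have g0 := density_ge0 R g; have g1 := density_le1.
by case: (g a b); rewrite /= ?(mulr1n, mulr0n); nra.
Qed.

Lemma centred_codegree_offdiag b b' : b != b' ->
  `|centred_codegree b b'| <= 3 * `|eps| * N.
Proof.
move=> neq_bb'; rewrite centred_codegreeE.
have := codegree_deviation neq_bb'; have := degree_deviation b; have := degree_deviation b'.
rewrite !ler_norml => /andP[d1 d1'] /andP[d2 d2'] /andP[c c'].
have g0 := density_ge0 R g.
have eN0 : 0 <= `|eps| * N by rewrite mulr_ge0.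
have γeN : γ ^+ 2 * (`|eps| * N) <= `|eps| * N by rewrite ler_piMl ?expr_le1.
apply/andP; split; nra.
Qed.

Lemma sum_centred_sqrE (v : T -> R) :
  \sum_a (\sum_b v b * (A a b - γ)) ^+ 2
    = \sum_b \sum_b' v b * v b' * centred_codegree b b'.
Proof.
under eq_bigr do rewrite expr2 mulr_suml.
under eq_bigr do under eq_bigr do rewrite mulr_sumr.
rewrite exchange_big /=; apply: eq_bigr => b _.
rewrite exchange_big /=; apply: eq_bigr => b' _.
by rewrite /centred_codegree mulr_sumr; apply: eq_bigr => a _; ring.
Qed.

Lemma sum_centred_sqr_le (v : T -> R) (Mv : R) : (forall b, `|v b| <= Mv) ->
  \sum_a (\sum_b v b * (A a b - γ)) ^+ 2 <= Mv ^+ 2 * N ^+ 2 * (3 * `|eps| * N + 1).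
Proof.
move=> v_le.
have C_le b b' : `|centred_codegree b b'| <= 3 * `|eps| * N + (b == b')%:R * N.
  case: eqVneq => [<-|/centred_codegree_offdiag]; last by rewrite mul0r addr0.
  have /andP[C0 CN] := centred_codegree_diag b.
  have : 0 <= 3 * `|eps| * N by rewrite !mulr_ge0.
  by rewrite mul1r (ger0_norm C0); lra.
have row_sum b :
    \sum_(b' : T) (3 * `|eps| * N + (b == b')%:R * N) = N * (3 * `|eps| * N + 1).
  rewrite big_split /= sumr_constT (bigD1 b) //= eqxx mul1r big1 ?addr0.
    by rewrite mulrDr mulr1.
  by move=> b' /negbTE; rewrite eq_sym => ->; rewrite mul0r.
have -> : Mv ^+ 2 * N ^+ 2 * (3 * `|eps| * N + 1)
    = \sum_(b : T) \sum_(b' : T) Mv ^+ 2 * (3 * `|eps| * N + (b == b')%:R * N).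
  under eq_bigr do rewrite -mulr_sumr row_sum.
  by rewrite sumr_constT; ring.
rewrite sum_centred_sqrE; apply: le_trans (ler_norm _) _.
apply: le_trans (ler_norm_sum _ _ _) _; apply: ler_sum => b _.
apply: le_trans (ler_norm_sum _ _ _) _; apply: ler_sum => b' _.
rewrite !normrM expr2; apply: ler_pM; rewrite ?mulr_ge0 //.
by apply: ler_pM.
Qed.

Lemma discrepancy (u v : T -> R) (Mu Mv d : R) :
  0 <= Mu -> 0 < Mv -> 0 < d ->
  (forall a, `|u a| <= Mu) -> (forall b, `|v b| <= Mv) ->
  3 * `|eps| * N + 1 <= d ^+ 2 * N ->
  `|\sum_a u a * \sum_b v b * A a b - γ * (\sum_a u a) * (\sum_b v b)|
    <= Mu * Mv * d * N ^+ 2.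
Proof.
move=> Mu0 Mv0 d0 u_le v_le N_large.
have N0 : 0 < N.
  rewrite lt0r ler0n andbT; apply/eqP => N0.
  by move: N_large; rewrite N0 !mulr0 add0r ler10.
pose w a := \sum_b v b * (A a b - γ).
have -> : \sum_a u a * \sum_b v b * A a b - γ * (\sum_a u a) * (\sum_b v b)
    = \sum_a u a * w a.
  rewrite mulrAC [_ * \sum_a u a]mulrC mulr_suml -sumrB; apply: eq_bigr => a _.
  rewrite -mulrBr mulr_sumr -sumrB /w; congr (_ * _).
  by apply: eq_bigr => b _; ring.
have w_sqr : \sum_a w a ^+ 2 <= N * (Mv * d * N) ^+ 2.
  apply: le_trans (sum_centred_sqr_le v_le) _.
  have := ler_wpM2l (mulr_ge0 (sqr_ge0 Mv) (sqr_ge0 N)) N_large.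
  by rewrite !exprMn; nra.
have w_abs := sum_norm_le_of_sum_sqr (mulr_gt0 (mulr_gt0 Mv0 d0) N0) w_sqr.
have -> : Mu * Mv * d * N ^+ 2 = Mu * (N * (Mv * d * N)) by ring.
apply: le_trans (ler_norm_sum _ _ _) _.
apply: le_trans _ (ler_wpM2l Mu0 w_abs).
by rewrite mulr_sumr; apply: ler_sum => a _; rewrite normrM ler_wpM2r.
Qed.

Lemma edge_sum_discrepancy (I J : finType) (f : I -> T) (f' : J -> T)
    (X : {set I}) (Y : {set J}) (h : I -> R) (k : J -> R) (Mh Mk d : R) :
  {in X &, injective f} -> {in Y &, injective f'} -> 0 <= Mh -> 0 < Mk -> 0 < d ->
  {in X, forall x, `|h x| <= Mh} -> {in Y, forall y, `|k y| <= Mk} ->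
  3 * `|eps| * N + 1 <= d ^+ 2 * N ->
  `|\sum_(x in X) \sum_(y in Y) h x * k y * A (f x) (f' y)
      - γ * (\sum_(x in X) h x) * (\sum_(y in Y) k y)| <= Mh * Mk * d * N ^+ 2.
Proof.
move=> f_inj f'_inj Mh0 Mk0 d0 h_le k_le N_large.
have := discrepancy Mh0 Mk0 d0 (norm_pushforward_le f_inj Mh0 h_le)
  (norm_pushforward_le f'_inj (ltW Mk0) k_le) N_large.
rewrite !sum_pushforward sum_pushforwardM.
under eq_bigr do rewrite (sum_pushforwardM f' Y k (fun b => A _ b)) mulr_sumr.
by under eq_bigr do under eq_bigr do rewrite mulrA.
Qed.

End Discrepancy.

Section DisjointPairs.
Variables (T : finType) (X : {set T * T}).
Hypothesis X_disj : disjoint_pairs X.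

Lemma disjoint_pairs_inj_fst : {in X &, injective fst}.
Proof.
move=> p q pX qX eq_pq1; apply/eqP; apply: contraT => neq_pq.
have := X_disj.2 p q pX qX neq_pq; rewrite -setI_eq0 => /eqP/setP/(_ p.1).
by rewrite !inE eqxx eq_pq1 eqxx.
Qed.

Lemma disjoint_pairs_inj_snd : {in X &, injective snd}.
Proof.
move=> p q pX qX eq_pq2; apply/eqP; apply: contraT => neq_pq.
have := X_disj.2 p q pX qX neq_pq; rewrite -setI_eq0 => /eqP/setP/(_ p.2).
by rewrite !inE eqxx eq_pq2 eqxx !orbT.
Qed.

Lemma disjoint_pairs_card_le (R : numDomainType) : #|X|%:R <= #|T|%:R :> R.
Proof. by rewrite ler_nat -(card_in_imset disjoint_pairs_inj_fst) max_card. Qed.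

End DisjointPairs.

Lemma sum_pairE (R : nmodType) (I J : finType) (F : I * J -> R) :
  \sum_p F p = \sum_i \sum_j F (i, j).
Proof. by rewrite pair_bigA; apply: eq_bigr => -[]. Qed.

Lemma triple_countE (R : nzSemiRingType) (T : finType) (g : rel T) (X Y Z : {set T * T}) :
  (triple_count g X Y Z)%:R = \sum_(z in Z) \sum_(x in X) \sum_(y in Y)
     (g z.1 x.2)%:R * (g x.1 y.2)%:R * (g y.1 z.2)%:R :> R.
Proof.
rewrite /triple_count natr_cardE sum_pairE sum_pairE.
under eq_bigr do rewrite exchange_big /=.
rewrite exchange_big /= [RHS]big_mkcond; apply: eq_bigr => z _.
have [zZ|zNZ] := boolP (z \in Z); last first.
  by rewrite big1 // => x _; rewrite big1 // => y _; rewrite !inE (negbTE zNZ) !andbF.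
rewrite [RHS]big_mkcond; apply: eq_bigr => x _.
have [xX|xNX] := boolP (x \in X); last by rewrite big1 // => y _; rewrite !inE (negbTE xNX).
rewrite [RHS]big_mkcond; apply: eq_bigr => y _.
rewrite !inE zZ xX /=; case: (y \in Y) => //=.
by rewrite -!natrM !mulnb; case: (g x.1 y.2); case: (g y.1 z.2); case: (g z.1 x.2).
Qed.

Lemma norm_sum_bool_le_card {R : numDomainType} {I : finType} (W : {pred I}) (b : I -> bool) :
  `|\sum_(x in W) (b x)%:R| <= #|W|%:R :> R.
Proof.
rewrite ger0_norm ?sumr_ge0 // -sum1_card natr_sum.
by apply: ler_sum => x _; case: (b x).
Qed.

Lemma normr_bool_le1 {R : numDomainType} (b : bool) : `|b%:R| <= 1 :> R.
Proof. by case: b; rewrite ?normr1 ?normr0. Qed.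

Section TripleCount.
Variables (R : realFieldType) (T : finType) (g : rel T) (eps d : R) (X Y Z : {set T * T}).
Hypotheses (g_sym : symmetric g) (g_qr : quasirandom g eps 2)
  (density_le1 : density R g <= 1) (d_gt0 : 0 < d)
  (X_disj : disjoint_pairs X) (Y_disj : disjoint_pairs Y) (Z_disj : disjoint_pairs Z)
  (N_large : 3 * `|eps| * #|T|%:R + 1 <= d ^+ 2 * #|T|%:R).

Local Notation γ := (density R g).
Local Notation N := (#|T|%:R : R).
Local Notation A a b := ((g a b)%:R : R).

Lemma replace_first_edge :
  `|(triple_count g X Y Z)%:R
      - γ * \sum_(z in Z) (\sum_(x in X) A z.1 x.2) * (\sum_(y in Y) A y.1 z.2)|
    <= d * N ^+ 3.
Proof.
rewrite triple_countE mulr_sumr -sumrB; apply: le_trans (ler_norm_sum _ _ _) _.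
apply: (@le_trans _ _ (\sum_(z in Z) d * N ^+ 2)).
  apply: ler_sum => z _.
  have := edge_sum_discrepancy g_sym g_qr density_le1
    (disjoint_pairs_inj_fst X_disj) (disjoint_pairs_inj_snd Y_disj) ler01 ltr01 d_gt0
    (h := fun x => A z.1 x.2) (k := fun y => A y.1 z.2)
    (fun _ _ => normr_bool_le1 _) (fun _ _ => normr_bool_le1 _) N_large.
  by rewrite !mul1r -mulrA; under eq_bigr do under eq_bigr do rewrite mulrAC.
rewrite sumr_const -[_ *+ #|Z|]mulr_natl [N ^+ 3]exprS [d * (N * _)]mulrCA.
rewrite ler_wpM2r ?(disjoint_pairs_card_le Z_disj) //.
by rewrite mulr_ge0 ?exprn_ge0 // ltW.
Qed.

Lemma replace_second_edge :
  `|\sum_(z in Z) (\sum_(x in X) A z.1 x.2) * (\sum_(y in Y) A y.1 z.2)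
      - γ * #|X|%:R * \sum_(z in Z) \sum_(y in Y) A y.1 z.2|
    <= #|Y|%:R * d * N ^+ 2.
Proof.
have := edge_sum_discrepancy g_sym g_qr density_le1
  (disjoint_pairs_inj_fst Z_disj) (disjoint_pairs_inj_snd X_disj) (ler0n _ #|Y|) ltr01 d_gt0
  (h := fun z => \sum_(y in Y) A y.1 z.2) (k := fun _ => 1)
  (fun _ _ => norm_sum_bool_le_card _ _) (fun _ _ => normr_bool_le1 true) N_large.
rewrite mulr1 sumr_const mulrAC.
under eq_bigr do under eq_bigr do rewrite mulr1.
by under eq_bigr do rewrite -mulr_sumr mulrC.
Qed.

Lemma replace_third_edge :
  `|\sum_(z in Z) \sum_(y in Y) A y.1 z.2 - γ * #|Y|%:R * #|Z|%:R| <= d * N ^+ 2.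
Proof.
have := edge_sum_discrepancy g_sym g_qr density_le1
  (disjoint_pairs_inj_fst Y_disj) (disjoint_pairs_inj_snd Z_disj) ler01 ltr01 d_gt0
  (h := fun _ => 1) (k := fun _ => 1)
  (fun _ _ => normr_bool_le1 true) (fun _ _ => normr_bool_le1 true) N_large.
rewrite !mul1r !sumr_const exchange_big /=.
by under eq_bigr do under eq_bigr do rewrite !mul1r.
Qed.

Lemma triple_count_ge :
  γ ^+ 3 * #|X|%:R * #|Y|%:R * #|Z|%:R - 3 * d * N ^+ 3 <= (triple_count g X Y Z)%:R.
Proof.
have := replace_first_edge; have := replace_second_edge; have := replace_third_edge.
set C := (triple_count _ _ _ _)%:R; set P := \sum_(z in Z) _ * _.
set Q := \sum_(z in Z) \sum_(y in Y) _.
rewrite !ler_distl => /andP[Q_ge _] /andP[P_ge _] /andP[C_ge _].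
have γ0 := density_ge0 R g.
have XN := disjoint_pairs_card_le X_disj R; have YN := disjoint_pairs_card_le Y_disj R.
have dN2 : 0 <= d * N ^+ 2 by rewrite mulr_ge0 ?exprn_ge0 // ltW.
have P_ge' :
    γ * #|X|%:R * (γ * #|Y|%:R * #|Z|%:R - d * N ^+ 2) - #|Y|%:R * d * N ^+ 2 <= P.
  by apply: le_trans P_ge; rewrite lerD2r ler_wpM2l // mulr_ge0.
have C_ge' : γ * (γ * #|X|%:R * (γ * #|Y|%:R * #|Z|%:R - d * N ^+ 2)
    - #|Y|%:R * d * N ^+ 2) - d * N ^+ 3 <= C.
  by apply: le_trans C_ge; rewrite lerD2r ler_wpM2l.
have γ2X : γ ^+ 2 * #|X|%:R <= N.
  by apply: le_trans XN; rewrite ler_piMl // expr_le1.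
have γY : γ * #|Y|%:R <= N by apply: le_trans YN; rewrite ler_piMl.
apply: le_trans C_ge'; rewrite [N ^+ 3]exprS.
have := ler_wpM2r dN2 γ2X; have := ler_wpM2r dN2 γY.
nra.
Qed.

End TripleCount.

Lemma large_n_condition (R : realFieldType) (e d n : R) :
  `|e| <= d ^+ 2 / 6 -> 2 < d ^+ 2 * n -> 0 <= n -> 3 * `|e| * n + 1 <= d ^+ 2 * n.
Proof. by move=> e_small n_large n0; nra. Qed.

Theorem lemma5p7 (R : realType)
    (G : forall n : nat, rel 'I_n) (eps : nat -> R)
    (X Y Z : forall n : nat, {set 'I_n * 'I_n}) :
  (forall n, simple_graph (G n)) ->
  (forall n, quasirandom (G n) (eps n) 2) ->
  (* eps_n = o(1) *)
  (forall e : R, 0 < e -> exists N : nat, forall n, (N <= n)%N -> `|eps n| <= e) ->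
  (forall n, disjoint_pairs (X n) /\ disjoint_pairs (Y n) /\ disjoint_pairs (Z n)) ->
  (* gamma = Omega(1), 1 - gamma = Omega(1), |X|,|Y|,|Z| = Omega(n) *)
  (exists c : R, 0 < c /\ exists N0 : nat, forall n, (N0 <= n)%N ->
     [/\ c <= density R (G n), c <= 1 - density R (G n),
         c * n%:R <= (#|X n|)%:R, c * n%:R <= (#|Y n|)%:R
       & c * n%:R <= (#|Z n|)%:R]) ->
  (* count >= gamma^3 |X||Y||Z|/8 - o(n^3) *)
  forall delta : R, 0 < delta -> exists N : nat, forall n, (N <= n)%N ->
    density R (G n) ^+ 3 * (#|X n|)%:R * (#|Y n|)%:R * (#|Z n|)%:R / 8
      - delta * n%:R ^+ 3
    <= (triple_count (G n) (X n) (Y n) (Z n))%:R.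
Proof.
move=> G_simple G_qr eps_small XYZ_disj [c [c_gt0 [N0 c_le]]] delta delta_gt0.
pose d := delta / 3; have d_gt0 : 0 < d by rewrite divr_gt0.
have [N1 eps_le] := eps_small (d ^+ 2 / 6) (divr_gt0 (exprn_gt0 2 d_gt0) (ltr0n _ 6)).
pose N2 := Num.Def.archi_bound (2 / d ^+ 2).
have N2_gt : 2 / d ^+ 2 < N2%:R by apply: archi_boundP; rewrite divr_ge0 ?exprn_ge0 ?ltW.
exists (maxn N0 (maxn N1 N2)) => n; rewrite !geq_max => /and3P[n_N0 n_N1 n_N2].
have density_le1 : density R (G n) <= 1 by have [_ + _ _ _] := c_le n n_N0; lra.
have n_large : 2 < d ^+ 2 * n%:R.
  by rewrite mulrC -ltr_pdivrMr ?exprn_gt0 // (lt_le_trans N2_gt) ?ler_nat.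
have [X_disj [Y_disj Z_disj]] := XYZ_disj n.
have := triple_count_ge (G_simple n).1 (G_qr n) density_le1 d_gt0 X_disj Y_disj Z_disj
  (large_n_condition (eps_le n n_N1) _ (ler0n _ _)).
rewrite card_ord => /(_ n_large).
have : 0 <= density R (G n) ^+ 3 * #|X n|%:R * #|Y n|%:R * #|Z n|%:R.
  by do 3 apply: mulr_ge0 => //; exact/exprn_ge0/density_ge0.
rewrite /d; lra.
Qed.
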